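(* Let $p\ge 7$ be a prime. Then $$\sum_{k=1}^{p-1}\frac{H_k H_{k,2}}{k}\equiv -\frac{3}{2}\sum_{k=1}^{p-1}\frac{H_k^2}{k^2}\pmod{p}.$$
   Context: For positive integers $n,m$, $H_{n,m}=\sum_{k=1}^n 1/k^m$ and $H_n=H_{n,1}$. Congruences modulo $p$ are taken in the ring of rationals with denominators not divisible by $p$. *)

From HB Require Import structures.
From mathcomp Require Import all_boot all_order all_algebra.
Set Implicit Arguments. Unset Strict Implicit. Unset Printing Implicit Defensive.
Import Order.TTheory GRing.Theory Num.Theory.
Local Open Scope ring_scope.

Definition Hm (n m : nat) : rat := \sum_(1 <= k < n.+1) ((k%:R : rat) ^+ m)^-1.
Definition H (n : nat) : rat := Hm n 1.

(* Congruence modulo p in the ring of rationals with denominator prime to p: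
   x - y = p * (a/b) with b not divisible by p; for the reduced fraction x - y
   this means p divides the numerator and not the denominator. *)
Definition rat_congr (p : nat) (x y : rat) : Prop :=
  (p %| `|numq (x - y)|)%N /\ ~~ (p %| `|denq (x - y)|)%N.

From HB Require Import structures.
From mathcomp Require Import all_boot all_order all_algebra.
From mathcomp Require Import ring zify.
Import Order.TTheory GRing.Theory Num.Theory.
Local Open Scope ring_scope.

(* For a prime p >= 7 both sides of the congruence vanish mod p.  With
   A = sum_{k<p} H_k H_{k,2}/k and B = sum_{k<p} H_k^2/k^2 we show A = B = 0 in F_p:
   - the binomial transform T_n(a) = sum_{k=1}^n (-1)^(k-1) C(n,k) a_k commutes with
     "sum a_k/k" and "partial sums of a_j/j", and T_{p-1}(a) = -sum a_k in F_p;
   - H_{p-1,m} = 0 in F_p for m = 1, 2, 4 (power sums over a finite field);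
   - telescoping H_{k,2}^2, H_k H_{k,3}, H_k^2 H_{k,2} and the reflection
     H_{p-1-k} = H_k give sum H_{k,2}/k^2 = sum H_k/k^3 = sum H_{k,3}/k = 0 and B + 2A = 0;
   - with H_k^2 = 2 V_k - H_{k,2}, V_k = sum_{j<=k} H_j/j, the binomial transform turns
     sum V_k/k^2 into -sum H_{k,3}/k = 0, so B = 0 and then A = 0.
   Finally rationals with denominator prime to p reduce to F_p compatibly with the
   ring operations, and rationals with equal reductions are congruent mod p. *)

Definition recip {F : fieldType} (n : nat) : F := (n%:R)^-1.

Definition binom_tr {F : fieldType} (n : nat) (a : nat -> F) : F :=
  \sum_(k < n) (-1) ^+ k * 'C(n, k.+1)%:R * a k.+1.

Definition nat_invertible (F : fieldType) (n : nat) : Prop :=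
  forall k, (0 < k <= n)%N -> (k%:R : F) != 0.

Definition harm {F : fieldType} (n m : nat) : F := \sum_(k < n) recip k.+1 ^+ m.

Definition harm11 {F : fieldType} (n : nat) : F := \sum_(k < n) harm k.+1 1 * recip k.+1.

Lemma sum_telescope (V : zmodType) (u : nat -> V) n :
  \sum_(k < n) (u k.+1 - u k) = u n - u 0%N.
Proof. by rewrite -(big_mkord xpredT (fun k => u k.+1 - u k)) telescope_sumr. Qed.

Lemma sum_triangle (R : comNzRingType) (c b : nat -> R) n :
  \sum_(k < n) c k * \sum_(j < k.+1) b j = \sum_(j < n) b j * \sum_(j <= k < n) c k.
Proof.
elim: n => [|n IH]; first by rewrite !big_ord0.
have split_last : \sum_(j < n.+1) b j * \sum_(j <= k < n.+1) c k =
    \sum_(j < n.+1) b j * \sum_(j <= k < n) c k + (\sum_(j < n.+1) b j) * c n.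
  rewrite mulr_suml -big_split; apply: eq_bigr => j _ /=.
  by rewrite big_nat_recr ?mulrDr // -ltnS.
rewrite big_ord_recr /= IH split_last [X in _ = X + _]big_ord_recr /= big_geq //.
by rewrite mulr0 addr0 mulrC.
Qed.

(* A power sum over a finite field vanishes as soon as some nonzero c has
   c^m <> 1: the sum is invariant under x |-> c x, which scales it by c^m. *)
Lemma sum_powers_eq0 (F : finFieldType) (m : nat) (c : F) :
  c != 0 -> c ^+ m != 1 -> \sum_(x : F) x ^+ m = 0.
Proof.
move=> c_neq0 cm_neq1; set S := \sum_(x : F) x ^+ m.
have S_scaled : S = c ^+ m * S.
  rewrite {1}/S (reindex_inj (mulfI c_neq0)) /= mulr_sumr.
  by apply: eq_bigr => x _; rewrite exprMn.
have : (1 - c ^+ m) * S = 0 by rewrite mulrBl mul1r -S_scaled subrr.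
by move/eqP; rewrite mulf_eq0 subr_eq0 eq_sym (negbTE cm_neq1) => /eqP.
Qed.

Lemma two_pow_neq1 (R : nzRingType) m :
  ((2 ^ m - 1)%N%:R : R) != 0 -> (2%:R ^+ m : R) != 1.
Proof. by rewrite natrB ?expn_gt0 // natrX mulr1n subr_eq0. Qed.

Section BinomialTransform.
Variable F : fieldType.
Implicit Types (a b : nat -> F) (n k : nat).

Lemma binom_tr_ext n a b : a =1 b -> binom_tr n a = binom_tr n b.
Proof. by move=> eq_ab; apply: eq_bigr => k _; rewrite eq_ab. Qed.

(* sum_{k=1}^n (-1)^(k-1) C(n,k) = 1, i.e. (1 - 1)^n = 0. *)
Lemma binom_tr_one n : (0 < n)%N -> binom_tr n (fun=> 1 : F) = 1.
Proof.
move=> n_gt0; have := exprDn (1 : F) (-1) n.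
rewrite subrr expr0n eqn0Ngt n_gt0 big_ord_recl /= expr0 mulr1 bin0 expr1n.
move=> /esym/eqP; rewrite addrC addr_eq0 => /eqP sum_eq.
rewrite -[1 in RHS]opprK -sum_eq -sumrN; apply: eq_bigr => i _.
by rewrite expr1n mul1r mulr1 /bump /= add1n exprS -mulr_natr; ring.
Qed.

Lemma bin_recip n k : nat_invertible F n.+1 -> (k < n.+1)%N ->
  'C(n, k)%:R * recip k.+1 = 'C(n.+1, k.+1)%:R * recip n.+1 :> F.
Proof.
move=> inv k_le; apply/eqP; rewrite eqr_div ?inv //= -!natrM.
by rewrite [in X in X == _]mulnC [in X in _ == X]mulnC -mul_bin_diag.
Qed.

Lemma binom_tr_sum_recip n a : nat_invertible F n ->
  \sum_(m < n) binom_tr m.+1 a * recip m.+1 = binom_tr n (fun k => a k * recip k).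
Proof.
elim: n => [|n IH] inv; first by rewrite big_ord0 /binom_tr big_ord0.
rewrite big_ord_recr /= IH; last by move=> k /andP[k0 kn]; apply: inv; rewrite k0 ltnW.
rewrite /binom_tr [RHS](eq_bigr (fun k : 'I_n.+1 =>
    (-1) ^+ k * 'C(n, k.+1)%:R * (a k.+1 * recip k.+1) +
    (-1) ^+ k * 'C(n, k)%:R * (a k.+1 * recip k.+1))); last first.
  by move=> k _ /=; rewrite binS natrD; ring.
rewrite big_split /= [in RHS]big_ord_recr /= bin_small // mulr0 mul0r addr0.
congr (_ + _); rewrite mulr_suml; apply: eq_bigr => k _.
have -> : (-1) ^+ k * 'C(n, k)%:R * (a k.+1 * recip k.+1) =
          (-1) ^+ k * a k.+1 * ('C(n, k)%:R * recip k.+1) by ring.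
by rewrite bin_recip //; ring.
Qed.

(* sum_{k=j}^n (-1)^k C(n+1,k+1) = (-1)^j C(n,j), by Pascal's rule and telescoping. *)
Lemma alternating_bin_tail n j : (j < n.+1)%N ->
  \sum_(j <= k < n.+1) (-1) ^+ k * ('C(n.+1, k.+1)%:R : F) = (-1) ^+ j * 'C(n, j)%:R.
Proof.
move=> j_le; pose f k : F := (-1) ^+ k * 'C(n, k)%:R.
rewrite (eq_bigr (fun k => - (f k.+1 - f k))); last first.
  by move=> k _ /=; rewrite /f binS natrD exprS; ring.
by rewrite sumrN telescope_sumr 1?ltnW // /f bin_small // mulr0 sub0r opprK.
Qed.

Lemma binom_tr_partial n a : nat_invertible F n ->
  binom_tr n (fun k => \sum_(j < k) a j.+1 * recip j.+1) = binom_tr n a * recip n.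
Proof.
case: n => [|n] inv; first by rewrite /binom_tr !big_ord0 mul0r.
rewrite /binom_tr /= (@sum_triangle _ (fun k => (-1) ^+ k * 'C(n.+1, k.+1)%:R)
  (fun j => a j.+1 * recip j.+1)).
rewrite mulr_suml; apply: eq_bigr => j _; rewrite alternating_bin_tail //.
have -> : a j.+1 * recip j.+1 * ((-1) ^+ j * 'C(n, j)%:R) =
          (-1) ^+ j * a j.+1 * ('C(n, j)%:R * recip j.+1) by ring.
by rewrite bin_recip //; ring.
Qed.

End BinomialTransform.

Section HarmonicSums.
Variable F : fieldType.

Lemma harmS n m : harm n.+1 m = harm n m + recip n.+1 ^+ m :> F.
Proof. by rewrite /harm big_ord_recr. Qed.

Lemma harm0 m : harm 0 m = 0 :> F.
Proof. by rewrite /harm big_ord0. Qed.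

Lemma harm_sq n : harm n 1 ^+ 2 = 2%:R * harm11 n - harm n 2 :> F.
Proof.
elim: n => [|n IH]; first by rewrite /harm11 !harm0 big_ord0 expr0n mulr0 subr0.
have harm11S : harm11 n.+1 = harm11 n + harm n.+1 1 * recip n.+1 :> F.
  by rewrite /harm11 big_ord_recr.
have sqS : harm n.+1 1 ^+ 2 =
    harm n 1 ^+ 2 + 2%:R * (harm n.+1 1 * recip n.+1) - recip n.+1 ^+ 2 :> F.
  by rewrite !harmS; ring.
by rewrite sqS IH harm11S [harm n.+1 2]harmS; ring.
Qed.

End HarmonicSums.

Section HarmonicModP.
Variable p : nat.
Hypothesis p_prime : prime p.

Local Notation HF := (@harm 'F_p).
Local Notation VF := (@harm11 'F_p).

Lemma natr_Fp_neq0 k : (0 < k < p)%N -> (k%:R : 'F_p) != 0.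
Proof. by move=> /andP[k0 kp]; rewrite -(dvdn_pcharf (pchar_Fp p_prime)) gtnNdvd. Qed.

Lemma nat_invertible_Fp n : (n < p)%N -> nat_invertible 'F_p n.
Proof. by move=> np k /andP[k0 kn]; apply: natr_Fp_neq0; rewrite k0 (leq_ltn_trans kn). Qed.

(* C(p-1,k) = (-1)^k mod p, since p divides C(p,k+1) = C(p-1,k+1) + C(p-1,k). *)
Lemma bin_pred_Fp k : (k < p)%N -> ('C(p.-1, k)%:R : 'F_p) = (-1) ^+ k.
Proof.
elim: k => [|k IH] k_lt; first by rewrite bin0 expr0.
have pascal : 'C(p, k.+1) = ('C(p.-1, k.+1) + 'C(p.-1, k))%N.
  by rewrite -binS prednK // prime_gt0.
have : ('C(p, k.+1)%:R : 'F_p) = 0.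
  by apply/eqP; rewrite -(dvdn_pcharf (pchar_Fp p_prime)) prime_dvd_bin.
rewrite pascal natrD IH ?(ltnW k_lt) // => /eqP; rewrite addr_eq0 => /eqP ->.
by rewrite exprS mulN1r.
Qed.

Lemma binom_tr_Fp (a : nat -> 'F_p) : binom_tr p.-1 a = - \sum_(k < p.-1) a k.+1.
Proof.
rewrite /binom_tr -sumrN; apply: eq_bigr => k _.
have k_lt : (k.+1 < p)%N by have := ltn_ord k; have := prime_gt0 p_prime; lia.
by rewrite bin_pred_Fp // exprS mulrCA -expr2 sqrr_sign mulr1 mulN1r.
Qed.

Lemma sum_over_Fp (f : 'F_p -> 'F_p) : \sum_(x : 'F_p) f x = \sum_(k < p) f k%:R.
Proof.
rewrite -(big_mkord xpredT (fun k => f k%:R)).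
transitivity (\sum_(0 <= k < (Zp_trunc (pdiv p)).+2) f k%:R).
  by rewrite big_mkord; apply: eq_bigr => i _; rewrite natr_Zp.
by apply: congr_big => //; rewrite Fp_cast.
Qed.

(* H_{p-1,m} = sum_{x in F_p} x^m vanishes when 2^m <> 1 in F_p. *)
Lemma harm_full_eq0 m : (0 < m)%N -> (2%:R : 'F_p) != 0 ->
  (2%:R ^+ m : 'F_p) != 1 -> HF p.-1 m = 0.
Proof.
move=> m_gt0 two_neq0 two_m; rewrite -[RHS](@sum_powers_eq0 _ m _ two_neq0 two_m).
rewrite (reindex_inj invr_inj) sum_over_Fp -(big_mkord xpredT (fun k => (k%:R^-1) ^+ m)).
rewrite (big_ltn (prime_gt0 p_prime)) big_add1 big_mkord /=.
by rewrite invr0 expr0n eqn0Ngt m_gt0 add0r.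
Qed.

(* 1/(p-k) = -1/k, the source of the reflection H_{p-1-k} = H_k. *)
Lemma recip_reflect k : (k <= p)%N -> recip (p - k) = - recip k :> 'F_p.
Proof. by move=> k_le; rewrite /recip natrB // pchar_Fp_0 // sub0r invrN. Qed.

Lemma telescope_Fp (u : nat -> 'F_p) : u 0%N = 0 -> u p.-1 = 0 ->
  \sum_(k < p.-1) (u k.+1 - u k) = 0.
Proof. by move=> u0 u_end; rewrite sum_telescope u0 u_end subrr. Qed.

Hypothesis p_ge7 : (7 <= p)%N.

Lemma small_natr_neq0 k : (0 < k < 7)%N -> (k%:R : 'F_p) != 0.
Proof. by move=> /andP[k0 k7]; apply: natr_Fp_neq0; rewrite // k0 (leq_trans k7). Qed.

Lemma half_eq0 (y : 'F_p) : 2%:R * y = 0 -> y = 0.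
Proof.
have two_neq0 : (2%:R : 'F_p) != 0 by exact: small_natr_neq0.
by move/eqP; rewrite mulf_eq0 (negbTE two_neq0) => /eqP.
Qed.

(* Wolstenholme-type vanishing mod p of H_{p-1}, H_{p-1,2} and H_{p-1,4};
   for m = 4 we use 2^4 - 1 = 3 * 5 and p >= 7. *)
Lemma H1_full : HF p.-1 1 = 0.
Proof.
by apply: harm_full_eq0; rewrite ?small_natr_neq0 // two_pow_neq1 ?small_natr_neq0.
Qed.

Lemma H2_full : HF p.-1 2 = 0.
Proof.
by apply: harm_full_eq0; rewrite ?small_natr_neq0 // two_pow_neq1 ?small_natr_neq0.
Qed.

Lemma H4_full : HF p.-1 4 = 0.
Proof.
apply: harm_full_eq0; rewrite ?small_natr_neq0 // two_pow_neq1 //.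
by rewrite (_ : (2 ^ 4 - 1 = 3 * 5)%N) // natrM mulf_neq0 ?small_natr_neq0.
Qed.

(* sum_k H_{k,2}/k^2 = 0, by telescoping H_{k,2}^2. *)
Lemma sum_r2_H2 : \sum_(k < p.-1) recip k.+1 ^+ 2 * HF k.+1 2 = 0.
Proof.
apply: half_eq0; rewrite mulr_sumr.
rewrite (eq_bigr (fun k : 'I_p.-1 => (HF k.+1 2 ^+ 2 - HF k 2 ^+ 2) + recip k.+1 ^+ 4));
  last by move=> k _ /=; rewrite harmS; ring.
rewrite big_split /= (@telescope_Fp (fun k => HF k 2 ^+ 2)) ?H2_full ?harm0 ?expr0n //.
by rewrite -/(HF p.-1 4) H4_full addr0.
Qed.

Lemma harm_reflect k : (k <= p.-1)%N -> HF (p.-1 - k) 1 = HF k 1.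
Proof.
elim: k => [|k IH] k_le; first by rewrite subn0 H1_full harm0.
have p_gt0 := prime_gt0 p_prime.
have split_idx : (p.-1 - k = (p.-1 - k.+1).+1)%N by lia.
have reflect_idx : ((p.-1 - k.+1).+1 = p - k.+1)%N by lia.
have := IH (ltnW k_le); rewrite split_idx harmS reflect_idx recip_reflect; last by lia.
by rewrite [HF k.+1 1]harmS => <-; rewrite expr1 subrK.
Qed.

(* sum_k H_k/k^3 = 0: reflecting k -> p-1-k shows sum H_{k-1}^2/k^2 = sum H_k^2/k^2,
   and the difference of the two sums is sum 1/k^4 - 2 sum H_k/k^3. *)
Lemma sum_r3_H1 : \sum_(k < p.-1) recip k.+1 ^+ 3 * HF k.+1 1 = 0.
Proof.
have mirror : \sum_(k < p.-1) recip k.+1 ^+ 2 * HF k 1 ^+ 2 =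
              \sum_(k < p.-1) recip k.+1 ^+ 2 * HF k.+1 1 ^+ 2.
  rewrite (reindex_inj rev_ord_inj) /=; apply: eq_bigr => k _.
  have k_lt := ltn_ord k.
  have reflect_idx : ((p.-1 - k.+1).+1 = p - k.+1)%N by lia.
  by rewrite reflect_idx recip_reflect ?sqrrN ?harm_reflect //; lia.
apply: half_eq0; rewrite mulr_sumr.
rewrite (eq_bigr (fun k : 'I_p.-1 => recip k.+1 ^+ 4 +
    (recip k.+1 ^+ 2 * HF k.+1 1 ^+ 2 - recip k.+1 ^+ 2 * HF k 1 ^+ 2)));
  last by move=> k _ /=; rewrite harmS; ring.
by rewrite big_split sumrB /= mirror subrr addr0 -/(HF p.-1 4) H4_full.
Qed.

(* sum_k H_{k,3}/k = 0, by telescoping H_k H_{k,3}. *)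
Lemma sum_H3_r : \sum_(k < p.-1) HF k.+1 3 * recip k.+1 = 0.
Proof.
rewrite (eq_bigr (fun k : 'I_p.-1 => (HF k.+1 1 * HF k.+1 3 - HF k 1 * HF k 3) -
    recip k.+1 ^+ 3 * HF k.+1 1 + recip k.+1 ^+ 4));
  last by move=> k _ /=; rewrite !harmS; ring.
rewrite big_split sumrB /= (@telescope_Fp (fun k => HF k 1 * HF k 3)) ?harm0 ?H1_full ?mul0r //.
by rewrite sum_r3_H1 -/(HF p.-1 4) H4_full subrr add0r.
Qed.

(* B + 2A = 0, by telescoping H_k^2 H_{k,2}. *)
Lemma sum_relation :
  \sum_(k < p.-1) HF k.+1 1 ^+ 2 * recip k.+1 ^+ 2 +
  2%:R * \sum_(k < p.-1) HF k.+1 1 * HF k.+1 2 * recip k.+1 = 0.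
Proof.
rewrite mulr_sumr -big_split /=.
rewrite (eq_bigr (fun k : 'I_p.-1 => (HF k.+1 1 ^+ 2 * HF k.+1 2 - HF k 1 ^+ 2 * HF k 2) +
    2%:R * (recip k.+1 ^+ 3 * HF k.+1 1) + recip k.+1 ^+ 2 * HF k.+1 2 - recip k.+1 ^+ 4));
  last by move=> k _ /=; rewrite !harmS; ring.
rewrite sumrB 2!big_split /=.
rewrite (@telescope_Fp (fun k => HF k 1 ^+ 2 * HF k 2)) ?harm0 ?H2_full ?mulr0 //.
by rewrite -mulr_sumr sum_r3_H1 sum_r2_H2 -/(HF p.-1 4) H4_full mulr0 !addr0 subrr.
Qed.

Lemma binom_tr_H1 n : (n.+1 < p)%N -> binom_tr n.+1 (fun k => HF k 1) = recip n.+1.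
Proof.
move=> n_lt; have inv := @nat_invertible_Fp n.+1 n_lt.
rewrite (@binom_tr_ext _ _ _ (fun k => \sum_(j < k) (fun=> 1) j.+1 * recip j.+1)).
  by rewrite (@binom_tr_partial _ n.+1 (fun=> 1)) // binom_tr_one // mul1r.
by move=> k; apply: eq_bigr => j _; rewrite mul1r expr1.
Qed.

Lemma binom_tr_V n : (n.+1 < p)%N -> binom_tr n.+1 VF = recip n.+1 ^+ 2.
Proof.
move=> n_lt; have inv := @nat_invertible_Fp n.+1 n_lt.
have -> : binom_tr n.+1 VF =
    binom_tr n.+1 (fun k => \sum_(j < k) HF j.+1 1 * recip j.+1) by [].
by rewrite (@binom_tr_partial _ n.+1 (fun k => HF k 1)) // binom_tr_H1 // expr2.
Qed.

Lemma binom_tr_V_r n : (n.+1 < p)%N ->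
  binom_tr n.+1 (fun k => VF k * recip k) = HF n.+1 3.
Proof.
move=> n_lt; rewrite -binom_tr_sum_recip; last exact: nat_invertible_Fp.
apply: eq_bigr => m _; rewrite binom_tr_V -?exprSr //.
by have := ltn_ord m; lia.
Qed.

(* sum_k V_k/k^2 = -T_{p-1}(V_k/k^2) = -sum_m T_m(V_k/k)/m = -sum_m H_{m,3}/m = 0. *)
Lemma sum_V_r2 : \sum_(k < p.-1) VF k.+1 * recip k.+1 * recip k.+1 = 0.
Proof.
have p_gt0 := prime_gt0 p_prime.
apply: oppr_inj; rewrite oppr0 -(binom_tr_Fp (fun k => VF k * recip k * recip k)).
rewrite -(@binom_tr_sum_recip _ p.-1 (fun k => VF k * recip k)); last first.
  by apply: nat_invertible_Fp; lia.
rewrite -[RHS]sum_H3_r; apply: eq_bigr => m _; rewrite binom_tr_V_r //.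
by have := ltn_ord m; lia.
Qed.

(* B = 0, from H_k^2 = 2 V_k - H_{k,2}. *)
Lemma sum_Hsq_r2 : \sum_(k < p.-1) HF k.+1 1 ^+ 2 * recip k.+1 ^+ 2 = 0.
Proof.
rewrite (eq_bigr (fun k : 'I_p.-1 => 2%:R * (VF k.+1 * recip k.+1 * recip k.+1) -
    recip k.+1 ^+ 2 * HF k.+1 2)); last by move=> k _; rewrite harm_sq; ring.
by rewrite sumrB -mulr_sumr sum_V_r2 sum_r2_H2 mulr0 subr0.
Qed.

Lemma sum_H1_H2_r : \sum_(k < p.-1) HF k.+1 1 * HF k.+1 2 * recip k.+1 = 0.
Proof. by apply: half_eq0; have := sum_relation; rewrite sum_Hsq_r2 add0r. Qed.

Lemma sum_H_H2_div_eq0 : \sum_(1 <= k < p) HF k 1 * HF k 2 / k%:R = 0.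
Proof. by rewrite big_add1 big_mkord; exact: sum_H1_H2_r. Qed.

Lemma sum_Hsq_div_eq0 : \sum_(1 <= k < p) HF k 1 ^+ 2 / k%:R ^+ 2 = 0.
Proof.
rewrite big_add1 big_mkord -[RHS]sum_Hsq_r2; apply: eq_bigr => k _.
by rewrite /recip exprVn.
Qed.

End HarmonicModP.

Definition reduces (p : nat) (q : rat) (x : 'F_p) : Prop :=
  exists a b : int, q * b%:~R = a%:~R /\ (b%:~R : 'F_p) != 0 /\ x = a%:~R / b%:~R.

Section Reduction.
Variable p : nat.
Hypothesis p_prime : prime p.
Implicit Types (q : rat) (x : 'F_p).

Lemma reduces_add q1 q2 x1 x2 :
  reduces p q1 x1 -> reduces p q2 x2 -> reduces p (q1 + q2) (x1 + x2).
Proof.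
move=> [a1 [b1 [e1 [nz1 ->]]]] [a2 [b2 [e2 [nz2 ->]]]].
exists (a1 * b2 + a2 * b1), (b1 * b2); split; last split.
- by rewrite intrD !intrM -e1 -e2; ring.
- by rewrite intrM mulf_neq0.
- by rewrite intrD !intrM addf_div.
Qed.

Lemma reduces_mul q1 q2 x1 x2 :
  reduces p q1 x1 -> reduces p q2 x2 -> reduces p (q1 * q2) (x1 * x2).
Proof.
move=> [a1 [b1 [e1 [nz1 ->]]]] [a2 [b2 [e2 [nz2 ->]]]].
exists (a1 * a2), (b1 * b2); split; last split.
- by rewrite !intrM -e1 -e2; ring.
- by rewrite intrM mulf_neq0.
- by rewrite !intrM mulf_div.
Qed.

Lemma reduces_opp q x : reduces p q x -> reduces p (- q) (- x).
Proof.
move=> [a [b [e [nz ->]]]]; exists (- a), b; split; last split => //.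
- by rewrite intrN mulNr e.
- by rewrite intrN mulNr.
Qed.

Lemma reduces_nat n : reduces p n%:R n%:R.
Proof. by exists n%:Z, 1; rewrite mulr1 divr1 oner_eq0. Qed.

Lemma reduces_exp q x m : reduces p q x -> reduces p (q ^+ m) (x ^+ m).
Proof.
move=> red; elim: m => [|m IH]; first exact: (reduces_nat 1).
by rewrite !exprS; apply: reduces_mul.
Qed.

Lemma reduces_inv_nat k : (0 < k < p)%N -> reduces p (k%:R)^-1 (k%:R)^-1.
Proof.
move=> k_range; have k_neq0 : k != 0%N by case/andP: k_range; rewrite lt0n.
exists 1, k%:Z; split; last split.
- by rewrite mulrC -pmulrn mulfV // pnatr_eq0.
- by rewrite -pmulrn; apply: natr_Fp_neq0.
- by rewrite -pmulrn div1r.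
Qed.

Lemma reduces_sum m n (F1 : nat -> rat) (F2 : nat -> 'F_p) :
  (forall i, (m <= i < n)%N -> reduces p (F1 i) (F2 i)) ->
  reduces p (\sum_(m <= i < n) F1 i) (\sum_(m <= i < n) F2 i).
Proof.
move=> red; rewrite big_nat_cond [X in reduces _ _ X]big_nat_cond.
apply: (big_ind2 (reduces p)); first exact: (reduces_nat 0).
  by move=> ? ? ? ?; apply: reduces_add.
by move=> i /andP[i_range _]; apply: red.
Qed.

Lemma reduces_Hm n m : (n < p)%N -> reduces p (Hm n m) (harm n m).
Proof.
move=> n_lt; have -> : harm n m = \sum_(1 <= k < n.+1) ((k%:R ^+ m)^-1) :> 'F_p.
  by rewrite big_add1 big_mkord; apply: eq_bigr => k _; rewrite /recip exprVn.
apply: reduces_sum => k /andP[k_gt0 k_le]; rewrite -!exprVn; apply: reduces_exp.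
by apply: reduces_inv_nat; rewrite k_gt0 (leq_trans k_le).
Qed.

(* A rational reducing to 0 is divisible by p in the sense of rat_congr:
   from num * b = a * den with p | a, p not dividing b, and num, den coprime. *)
Lemma reduces_to_zero q : reduces p q 0 ->
  (p %| `|numq q|)%N /\ ~~ (p %| `|denq q|)%N.
Proof.
move=> [a [b [e [nz_b a_div_b]]]].
have int_eq0 (z : int) : ((z%:~R : 'F_p) == 0) = (p %| `|z|)%N.
  by rewrite -(dvdz_pcharf (pchar_Fp p_prime)).
have p_dvd_a : (p %| `|a|)%N.
  rewrite -int_eq0; move/eqP: a_div_b.
  by rewrite eq_sym mulf_eq0 invr_eq0 (negbTE nz_b) orbF.
have p_ndvd_b : ~~ (p %| `|b|)%N by rewrite -int_eq0.
have cross : (numq q * b = a * denq q)%R.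
  have den_neq0 : ((denq q)%:~R : rat) != 0 by rewrite intr_eq0 denq_neq0.
  apply: (@intr_inj rat); rewrite !intrM -e [RHS]mulrAC.
  by rewrite -[X in _ = X * _ * _](divq_num_den q) divfK.
have cross_abs : (`|numq q| * `|b| = `|a| * `|denq q|)%N by rewrite -!abszM cross.
split.
- have : (p %| `|numq q| * `|b|)%N by rewrite cross_abs dvdn_mulr.
  by rewrite Euclid_dvdM // (negbTE p_ndvd_b) orbF.
- apply/negP => p_dvd_den.
  have : (`|denq q| %| `|numq q| * `|b|)%N by rewrite cross_abs dvdn_mull.
  rewrite Gauss_dvdr; last by rewrite coprime_sym coprime_num_den.
  by move=> /(dvdn_trans p_dvd_den); apply/negP.
Qed.

Lemma rat_congr_of_reduces q1 q2 x :
  reduces p q1 x -> reduces p q2 x -> rat_congr p q1 q2.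
Proof.
move=> red1 red2; apply: reduces_to_zero; rewrite -(subrr x).
exact/reduces_add/reduces_opp.
Qed.

End Reduction.

Theorem lemma2p6 (p : nat) (hp : prime p) (h7 : (7 <= p)%N) :
  rat_congr p
    (\sum_(1 <= k < p) H k * Hm k 2 / (k%:R : rat))
    (- (3%:R / 2%:R) * \sum_(1 <= k < p) (H k) ^+ 2 / ((k%:R : rat) ^+ 2)).
Proof.
have inv k : (0 < k < p)%N -> reduces p (k%:R)^-1 (k%:R)^-1 := @reduces_inv_nat p hp k.
have red_harm k m : (1 <= k < p)%N -> reduces p (Hm k m) (harm k m).
  by move=> /andP[_ k_lt]; apply: reduces_Hm.
apply: (@rat_congr_of_reduces p hp _ _ 0).
- rewrite -(@sum_H_H2_div_eq0 p hp h7); apply: reduces_sum => k k_range.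
  by apply: reduces_mul; [apply: reduces_mul; apply: red_harm | apply: inv].
- rewrite -(mulr0 (- (3%:R / 2%:R) : 'F_p)) -(@sum_Hsq_div_eq0 p hp h7).
  apply: reduces_mul.
    by apply/reduces_opp/reduces_mul; [apply: reduces_nat | apply: inv; lia].
  apply: reduces_sum => k k_range; apply: reduces_mul.
    by apply: reduces_exp; apply: red_harm.
  by rewrite -!exprVn; apply: reduces_exp; apply: inv.
Qed.
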